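(* Let $\mathbf{x}\in\mathbb{R}^p$ be an observation with outcome $y\in\mathcal{Y}$, and $\lambda\ge 0$. Consider a generative density $p_\theta(\mathbf{x},\mathbf{s})$ with latent $\mathbf{s}\in\mathbb{R}^L$, a predictive model $p_\psi(y\mid\mathbf{s})$ and a variational encoder $q_\phi(\mathbf{s}\mid\mathbf{x})$, all infinitely differentiable in their parameters, where $\mathbf{s}\sim q_\phi(\mathbf{s}\mid\mathbf{x})$ is reparameterized as $\mathbf{s}=g_\phi(\epsilon,\mathbf{x})$ with $\epsilon\sim p(\epsilon)$ independent of $\phi,\mathbf{x}$, and gradients may be interchanged with expectations over $p(\epsilon)$. Consider the constrained problem $$\max_{\psi,\theta,\phi}\ \mathbb{E}_{q_\phi(\mathbf{s}\mid\mathbf{x})}\bigl[\log p_\theta(\mathbf{x},\mathbf{s})-\log q_\phi(\mathbf{s}\mid\mathbf{x})+\lambda\log p_\psi(y\mid\mathbf{s})\bigr]\quad\text{s.t.}\quad \nabla_\phi\,\mathbb{E}_{q_\phi(\mathbf{s}\mid\mathbf{x})}\bigl[\log p_\theta(\mathbf{x},\mathbf{s})-\log q_\phi(\mathbf{s}\mid\mathbf{x})\bigr]=0,$$ where, near the point of interest, the constraint determines $\phi=h(\theta)$ as a differentiable function of $\theta$ (by the implicit function theorem), and derivatives with respect to $\theta$ of terms depending on $\phi$ are taken through this dependence. Then at a stationary point of this problem: (i) $\phi$ satisfies the VAE stationarity condition $$\mathbb{E}_{p(\epsilon)}\Bigl[\nabla_\phi\bigl(\log p_\theta(\mathbf{x},g_\phi(\epsilon,\mathbf{x}))-\log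 q_\phi(g_\phi(\epsilon,\mathbf{x})\mid\mathbf{x})\bigr)\Bigr]=0;$$ (ii) $\theta$ satisfies $$\mathbb{E}_{p(\epsilon)}\bigl[\nabla_\theta\log p_\theta(\mathbf{x},g_\phi(\epsilon,\mathbf{x}))\bigr]=-\lambda\,\mathbb{E}_{p(\epsilon)}\bigl[\nabla_\theta\log p_\psi(y\mid g_\phi(\epsilon,\mathbf{x}))\bigr];$$ (iii) $\psi$, given $\phi$, satisfies the same stationarity condition as for the unconstrained supervised VAE objective, namely $\mathbb{E}_{p(\epsilon)}\bigl[\nabla_\psi\log p_\psi(y\mid g_\phi(\epsilon,\mathbf{x}))\bigr]=0$.
   Context: $\theta$ parameterizes the generative model, $\psi$ the classifier $p_\psi(y\mid\mathbf{s})$, and $\phi$ the encoder $q_\phi(\mathbf{s}\mid\mathbf{x})$ (which does not condition on $y$). The constraint (a first-order replacement of requiring $\phi$ to maximize the evidence lower bound for fixed $\theta$) forces the encoder to be a stationary point of the purely generative ELBO. In (ii), $\nabla_\theta\log p_\psi(y\mid g_\phi(\epsilon,\mathbf{x}))$ is nonzero only through the dependence $\phi=h(\theta)$ induced by the constraint. The objective is written for a single data pair $(\mathbf{x},y)$. *)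

From HB Require Import structures.
From mathcomp Require Import all_boot all_order all_algebra.
From mathcomp Require Import all_classical all_reals all_analysis.
Set Implicit Arguments. Unset Strict Implicit. Unset Printing Implicit Defensive.
Import Order.TTheory GRing.Theory Num.Theory.
Import numFieldNormedType.Exports.
Local Open Scope classical_set_scope.
Local Open Scope ring_scope.

Fixpoint Ck (R : realType) (V W : normedModType R) (k : nat) (f : V -> W)
  : Prop :=
  match k with
  | 0 => continuous f
  | k'.+1 => (forall z, differentiable f z) /\
             (forall v : V, Ck k' (fun z => 'D_v f z))
  end.

Definition smooth (R : realType) (V W : normedModType R) (f : V -> W) :=
  forall k, Ck k f.

Definition Expect (R : realType) d (T : measurableType d)
  (P : probability T R) (f : T -> R) : R := \int[P]_(e in setT) f e.

Definition grad (R : realType) (n : nat) (f : 'rV[R]_n -> R) (z : 'rV[R]_n)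
  : 'rV[R]_n := \row_i 'D_(delta_mx 0 i) f z.

Definition Evec (R : realType) d (T : measurableType d) (P : probability T R)
  (n : nat) (F : T -> 'rV[R]_n) : 'rV[R]_n :=
  \row_i Expect P (fun e => F e 0 i).

Definition grad_interchange (R : realType) d (T : measurableType d)
  (P : probability T R) (V : normedModType R) (f : V -> T -> R) (w : V) :=
  differentiable (fun w' => Expect P (f w')) w /\
  forall v : V, 'D_v (fun w' => Expect P (f w')) w =
                Expect P (fun e => 'D_v (fun w' => f w' e) w).

Section Model.
Variables (R : realType) (d : measure_display) (T : measurableType d)
  (P : probability T R) (p L a b c : nat) (Y : Type).
(* pd theta x s = p_theta(x,s);  qd phi s x = q_phi(s|x);
   pc psi y s = p_psi(y|s);  g phi e x = g_phi(e,x) *)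
Variables (pd : 'rV[R]_a -> 'rV[R]_p -> 'rV[R]_L -> R)
  (qd : 'rV[R]_b -> 'rV[R]_L -> 'rV[R]_p -> R)
  (pc : 'rV[R]_c -> Y -> 'rV[R]_L -> R)
  (g : 'rV[R]_b -> T -> 'rV[R]_p -> 'rV[R]_L)
  (x : 'rV[R]_p) (y : Y).

Definition elbo_eps (theta : 'rV[R]_a) (phi : 'rV[R]_b) (e : T) : R :=
  ln (pd theta x (g phi e x)) - ln (qd phi (g phi e x) x).

Definition sup_eps (psi : 'rV[R]_c) (phi : 'rV[R]_b) (e : T) : R :=
  ln (pc psi y (g phi e x)).

Definition ELBO theta phi : R := Expect P (elbo_eps theta phi).

Definition SUP psi phi : R := Expect P (sup_eps psi phi).

Definition objective (lam : R) psi theta phi : R :=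
  ELBO theta phi + lam * SUP psi phi.

Definition constraint theta phi : Prop :=
  grad (fun phi' => ELBO theta phi') phi = 0.
End Model.

From HB Require Import structures.
From mathcomp Require Import all_boot all_order all_algebra.
From mathcomp Require Import all_classical all_reals all_analysis.
Import Order.TTheory GRing.Theory Num.Theory.
Import numFieldNormedType.Exports.
Local Open Scope classical_set_scope.
Local Open Scope ring_scope.

(* The three conditions are read off the two stationarity equations, using
   that the gradient is linear and commutes with the expectation over noise.
   (i) is the constraint itself.  For (ii) the envelope argument applies:
   along phi = h(theta) the phi-gradient of the ELBO vanishes, so the total
   theta-gradient of ELBO(theta, h theta) is its partial theta-gradient, in
   which the entropy term -log q_phi is a constant.  For (iii), the ELBO does
   not involve psi, so stationarity in psi leaves lambda times the expected
   psi-gradient of log p_psi. *)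

Section PartialDerivatives.
Context {R : numFieldType}.

Lemma derive_increment_ext (V1 V2 W : normedModType R) (f : V1 -> W)
    (f' : V2 -> W) a a' v v' :
  (forall k : R, f (k *: v + a) - f a = f' (k *: v' + a') - f' a') ->
  'D_v f a = 'D_v' f' a'.
Proof.
move=> incr; rewrite /derive.
suff -> : (fun k : R => k^-1 *: ((f \o shift a) (k *: v) - f a)) =
          (fun k => k^-1 *: ((f' \o shift a') (k *: v') - f' a')) by [].
by apply/funext => k /=; rewrite incr.
Qed.

Context {A B W : normedModType R} (F : A -> B -> W).

Lemma derive_fst_dir t q u :
  'D_(u, 0) (fun w : A * B => F w.1 w.2) (t, q) = 'D_u (F^~ q) t.
Proof. by apply: derive_increment_ext => k /=; rewrite scaler0 add0r. Qed.

Lemma derive_snd_dir t q u :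
  'D_(0, u) (fun w : A * B => F w.1 w.2) (t, q) = 'D_u (F t) q.
Proof. by apply: derive_increment_ext => k /=; rewrite scaler0 add0r. Qed.

Lemma differentiable_fst_partial t q :
  differentiable (fun w : A * B => F w.1 w.2) (t, q) ->
  differentiable (F^~ q) t.
Proof.
move=> dF; have did : differentiable (@id A) t by exact: ex_diff.
exact: (differentiable_comp (differentiable_pair did (differentiable_cst q t)) dF).
Qed.

Lemma differentiable_snd_partial t q :
  differentiable (fun w : A * B => F w.1 w.2) (t, q) ->
  differentiable (F t) q.
Proof.
move=> dF; have did : differentiable (@id B) q by exact: ex_diff.
exact: (differentiable_comp (differentiable_pair (differentiable_cst t q) did) dF).
Qed.

End PartialDerivatives.

Section Gradients.
Context {R : realType} {n : nat}.

Lemma grad_cst (k : R) (z : 'rV[R]_n) : grad (fun=> k) z = 0.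
Proof. by apply/rowP => i; rewrite !mxE derive_cst. Qed.

Lemma grad_add_scale (f f' : 'rV[R]_n -> R) (k : R) z :
  differentiable f z -> differentiable f' z ->
  grad (fun z' => f z' + k * f' z') z = grad f z + k *: grad f' z.
Proof.
move=> df df'; apply/rowP => i; rewrite !mxE.
have -> : (fun z' => f z' + k * f' z') = f + k \*: f' by [].
have [dv dv'] : derivable f z (delta_mx 0 i) /\ derivable f' z (delta_mx 0 i).
  by split; exact: diff_derivable.
by rewrite deriveD ?deriveZ //; exact: derivableZ.
Qed.

Lemma grad_subr_cst (f : 'rV[R]_n -> R) (k : R) z :
  grad (fun z' => f z' - k) z = grad f z.
Proof.
apply/rowP => i; rewrite !mxE; apply: derive_increment_ext => t.
by rewrite opprB addrA subrK.
Qed.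

Lemma diff_eq0_of_grad_eq0 (f : 'rV[R]_n -> R) z u :
  differentiable f z -> grad f z = 0 -> 'd f z u = 0.
Proof.
move=> df gf0; rewrite (row_sum_delta u) linear_sum big1 // => i _.
rewrite linearZ /= -deriveE //.
by move/(congr1 (fun M : 'rV[R]_n => M 0 i)): gf0; rewrite !mxE => ->; rewrite scaler0.
Qed.

End Gradients.

Lemma grad_envelope (R : realType) (m n : nat) (F : 'rV[R]_m -> 'rV[R]_n -> R)
    (h : 'rV[R]_m -> 'rV[R]_n) t :
  differentiable (fun w : 'rV[R]_m * 'rV[R]_n => F w.1 w.2) (t, h t) ->
  differentiable h t -> grad (F t) (h t) = 0 ->
  grad (fun s => F s (h s)) t = grad (F^~ (h t)) t.
Proof.
move=> dF dh stat; apply/rowP => i; rewrite !mxE.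
set G := fun w : 'rV[R]_m * 'rV[R]_n => F w.1 w.2.
have did : differentiable (@id 'rV[R]_m) t by exact: ex_diff.
have dpair : differentiable (fun s => (s, h s)) t := differentiable_pair did dh.
rewrite (deriveE _ (differentiable_comp dpair dF)) (diff_comp dpair dF) /=.
rewrite (diff_pair did dh) diff_val /=.
set v := delta_mx 0 i; set u := 'd h t v.
have -> : (v, u) = (v, 0) + (0, u) by rewrite -{1}(addr0 v) -{1}(add0r u).
have dG0 : 'd G (t, h t) (0, u) = 0.
  rewrite -deriveE // derive_snd_dir.
  by rewrite deriveE ?diff_eq0_of_grad_eq0 //; exact: differentiable_snd_partial.
by rewrite linearD dG0 addr0 -deriveE // derive_fst_dir.
Qed.

Section ExpectedGradients.
Context {R : realType} {d : measure_display} {T : measurableType d}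
  (P : probability T R).

Lemma Evec_grad {n} {F : 'rV[R]_n -> T -> R} {z} :
  (forall v, 'D_v (fun z' => Expect P (F z')) z =
             Expect P (fun e => 'D_v (F^~ e) z)) ->
  Evec P (fun e => grad (F^~ e) z) = grad (fun z' => Expect P (F z')) z.
Proof.
move=> DE; apply/rowP => i; rewrite !mxE DE.
by congr Expect; apply/funext => e; rewrite mxE.
Qed.

Lemma Evec_grad_fst {m n} {F : 'rV[R]_m -> 'rV[R]_n -> T -> R} {t q} :
  grad_interchange P (fun w e => F w.1 w.2 e) (t, q) ->
  Evec P (fun e => grad (fun t' => F t' q e) t) =
  grad (fun t' => Expect P (F t' q)) t.
Proof.
case=> _ DE; apply: Evec_grad => v.
rewrite -(derive_fst_dir (fun t' q' => Expect P (F t' q'))) DE.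
by congr Expect; apply/funext => e; exact: (derive_fst_dir (fun t' q' => F t' q' e)).
Qed.

Lemma Evec_grad_snd {m n} {F : 'rV[R]_m -> 'rV[R]_n -> T -> R} {t q} :
  grad_interchange P (fun w e => F w.1 w.2 e) (t, q) ->
  Evec P (fun e => grad (fun q' => F t q' e) q) =
  grad (fun q' => Expect P (F t q')) q.
Proof.
case=> _ DE; apply: Evec_grad => v.
rewrite -(derive_snd_dir (fun t' q' => Expect P (F t' q'))) DE.
by congr Expect; apply/funext => e; exact: (derive_snd_dir (fun t' q' => F t' q' e)).
Qed.

End ExpectedGradients.

Theorem proposition2
  (R : realType) (d : measure_display) (T : measurableType d)
  (P : probability T R) (p L a b c : nat) (Y : Type)
  (pd : 'rV[R]_a -> 'rV[R]_p -> 'rV[R]_L -> R)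
  (qd : 'rV[R]_b -> 'rV[R]_L -> 'rV[R]_p -> R)
  (pc : 'rV[R]_c -> Y -> 'rV[R]_L -> R)
  (g : 'rV[R]_b -> T -> 'rV[R]_p -> 'rV[R]_L)
  (x : 'rV[R]_p) (y : Y) (lam : R) (h : 'rV[R]_a -> 'rV[R]_b)
  (psi0 : 'rV[R]_c) (theta0 : 'rV[R]_a) (phi0 : 'rV[R]_b)
  (* lambda >= 0 *)
  (hlam : 0 <= lam)
  (* densities are positive *)
  (pd_pos : forall th x' s, 0 < pd th x' s)
  (qd_pos : forall ph s x', 0 < qd ph s x')
  (pc_pos : forall ps y' s, 0 < pc ps y' s)
  (* infinitely differentiable models *)
  (pd_smooth : forall x', smooth (fun w : 'rV[R]_a * 'rV[R]_L => pd w.1 x' w.2))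
  (qd_smooth : forall x', smooth (fun w : 'rV[R]_b * 'rV[R]_L => qd w.1 w.2 x'))
  (pc_smooth : forall y', smooth (fun w : 'rV[R]_c * 'rV[R]_L => pc w.1 y' w.2))
  (g_smooth : forall e x', smooth (fun ph : 'rV[R]_b => g ph e x'))
  (* gradients may be interchanged with expectations over p(epsilon) *)
  (elbo_int : forall w : 'rV[R]_a * 'rV[R]_b,
      grad_interchange P (fun w' e => elbo_eps pd qd g x w'.1 w'.2 e) w)
  (sup_int : forall w : 'rV[R]_c * 'rV[R]_b,
      grad_interchange P (fun w' e => sup_eps pc g x y w'.1 w'.2 e) w)
  (sup_h_int : forall ps, \forall th \near theta0,
      grad_interchange P (fun th' e => sup_eps pc g x y ps (h th') e) th)
  (* near the point of interest the constraint determines phi = h(theta),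
     h differentiable *)
  (h_phi0 : h theta0 = phi0)
  (h_impl : \forall w \near (theta0, phi0),
      constraint P pd qd g x w.1 w.2 <-> w.2 = h w.1)
  (h_diff : \forall th \near theta0, differentiable h th)
  (* (psi0, theta0, phi0 = h theta0) is a stationary point of the problem *)
  (stat_psi : grad (fun ps => objective P pd qd pc g x y lam ps theta0 (h theta0)) psi0 = 0)
  (stat_theta : grad (fun th => objective P pd qd pc g x y lam psi0 th (h th)) theta0 = 0) :
  (* (i) *)
  Evec P (fun e => grad (fun ph => elbo_eps pd qd g x theta0 ph e) phi0) = 0 /\
  (* (ii) *)
  Evec P (fun e => grad (fun th => ln (pd th x (g phi0 e x))) theta0) =
    - lam *: Evec P (fun e => grad (fun th => ln (pc psi0 y (g (h th) e x))) theta0) /\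
  (* (iii) *)
  lam *: Evec P (fun e => grad (fun ps => ln (pc ps y (g phi0 e x))) psi0) = 0 /\
  (0 < lam -> Evec P (fun e => grad (fun ps => ln (pc ps y (g phi0 e x))) psi0) = 0).
Proof.
subst phi0.
have cons0 : constraint P pd qd g x theta0 (h theta0) by exact/(nbhs_singleton h_impl).
have dh : differentiable h theta0 := nbhs_singleton h_diff.
have [dE _] := elbo_int (theta0, h theta0).
have [dS _] := sup_int (psi0, h theta0).
have [dSh DSh] := nbhs_singleton (sup_h_int psi0).
have Egrad_sup : Evec P (fun e => grad (fun ps => ln (pc ps y (g (h theta0) e x))) psi0) =
    grad (fun ps => SUP P pc g x y ps (h theta0)) psi0 := Evec_grad_fst P (sup_int _).
split; first by rewrite (Evec_grad_snd P (elbo_int _)).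
split.
  have dEh : differentiable (fun th => ELBO P pd qd g x th (h th)) theta0.
    have did : differentiable (@id 'rV[R]_a) theta0 by exact: ex_diff.
    exact: (differentiable_comp (differentiable_pair did dh) dE).
  move: stat_theta; rewrite /objective grad_add_scale // grad_envelope // => stat.
  have -> : Evec P (fun e => grad (fun th => ln (pd th x (g (h theta0) e x))) theta0) =
      grad (fun th => ELBO P pd qd g x th (h theta0)) theta0.
    rewrite -(Evec_grad_fst P (elbo_int _)); congr Evec.
    by apply/funext => e; rewrite /elbo_eps grad_subr_cst.
  rewrite (Evec_grad P DSh).
  by apply/eqP; rewrite scaleNr -addr_eq0 stat.
move: stat_psi; rewrite /objective grad_add_scale //; last first.
  by apply: differentiable_fst_partial; exact: dS.
rewrite grad_cst add0r -Egrad_sup => stat; split=> // lam_gt0.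
by move/eqP: stat; rewrite scaler_eq0 gt_eqF //= => /eqP.
Qed.
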